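(* Let $A$ be a real alternative $^*$-algebra (not necessarily of finite dimension). For each $x\in C_A$: (1) $n(x)=n(x^c)$; (2) if $x\neq 0$ then $x$ is invertible and $x^{-1}=n(x)^{-1}x^c$; (3) $(x,x^c,y)=0$ for all $y\in A$; (4) $n(xy)=n(x)n(y)=n(y)n(x)=n(yx)$ for all $y\in C_A$. As a consequence, $C_A$ and $N_A$ are closed under multiplication and $C_A^*:=C_A\setminus\{0\}$, $N_A^*:=N_A\setminus\{0\}$ are multiplicative loops.
   Context: A real alternative $^*$-algebra is a real vector space $A$ with a bilinear product and a unit $1$ (with $\mathbb{R}$ identified with $\mathbb{R}1$) such that the associator $(x,y,z)=(xy)z-x(yz)$ is an alternating function, equipped with a $^*$-involution $x\mapsto x^c$, i.e. a real linear map with $(x^c)^c=x$, $(xy)^c=y^cx^c$ and $r^c=r$ for $r\in\mathbb{R}$. The norm is $n(x)=xx^c$. The nucleus of $A$ is $\{r\in A:(r,x,y)=0\ \forall x,y\in A\}$ and the center is $\{r$ in the nucleus$: rx=xr\ \forall x\in A\}$. The normal cone is $N_A=\{0\}\cup\{x\in A: n(x),n(x^c)\in\mathbb{R}\setminus\{0\}\}$ and the central cone is $C_A=\{0\}\cup\{x\in A: n(x),n(x^c)$ are invertible elements of the center of $A\}$. *)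

From HB Require Import structures.
From mathcomp Require Import all_boot all_order all_algebra.
From mathcomp Require Import reals.
Set Implicit Arguments. Unset Strict Implicit. Unset Printing Implicit Defensive.
Import Order.TTheory GRing.Theory Num.Theory.
Local Open Scope ring_scope.

Section AltStar.
Variables (R : realType) (V : lmodType R).
Variables (mul : V -> V -> V) (one : V) (c : V -> V).

Definition assoc (x y z : V) : V := mul (mul x y) z - mul x (mul y z).

(* real alternative *-algebra with unit [one], product [mul], involution [c];
   the scalars r are identified with r *: one. *)
Record is_alt_star_alg : Prop := {
  mul_linl : forall (a : R) (x y z : V), mul (a *: x + y) z = a *: mul x z + mul y z;
  mul_linr : forall (a : R) (x y z : V), mul x (a *: y + z) = a *: mul x y + mul x z;
  mul1x : forall x, mul one x = x;
  mulx1 : forall x, mul x one = x;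
  one_neq0 : one != 0;
  assoc_alt12 : forall x y, assoc x x y = 0;
  assoc_alt23 : forall x y, assoc x y y = 0;
  assoc_alt13 : forall x y, assoc x y x = 0;
  c_lin : forall (a : R) (x y : V), c (a *: x + y) = a *: c x + c y;
  c_invol : forall x, c (c x) = x;
  c_antimul : forall x y, c (mul x y) = mul (c y) (c x);
  c_real : forall r : R, c (r *: one) = r *: one
}.

Definition nrm (x : V) : V := mul x (c x).

Definition nucleus (r : V) : Prop := forall x y, assoc r x y = 0.
Definition center (r : V) : Prop := nucleus r /\ forall x, mul r x = mul x r.

Definition center_unit (u : V) : Prop :=
  center u /\ exists v, center v /\ mul u v = one /\ mul v u = one.

Definition real_nz (u : V) : Prop := exists r : R, r != 0 /\ u = r *: one.

Definition normal_cone (x : V) : Prop :=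
  x = 0 \/ (real_nz (nrm x) /\ real_nz (nrm (c x))).
Definition central_cone (x : V) : Prop :=
  x = 0 \/ (center_unit (nrm x) /\ center_unit (nrm (c x))).

Definition invertible (x : V) : Prop := exists y, mul x y = one /\ mul y x = one.

Definition is_loop (S : V -> Prop) : Prop :=
  S one /\
  (forall a b, S a -> S b -> S (mul a b)) /\
  (forall a b, S a -> S b -> exists! x, S x /\ mul a x = b) /\
  (forall a b, S a -> S b -> exists! y, S y /\ mul y a = b).

End AltStar.

From HB Require Import structures.
From mathcomp Require Import all_boot all_order all_algebra.
From mathcomp Require Import reals.
Import Order.TTheory GRing.Theory Num.Theory.
Local Open Scope ring_scope.
Set Implicit Arguments.

(* The engine of the proof is that in an alternative algebra over a field of
   characteristic 0 two mutually inverse elements a, b associate with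
   everything: (a, b, t) = 0, by the Teichmüller identity and the
   skew-symmetry of the associator.  For x in the central cone the flexible
   law n(x) x = x n(x^c) and the invertibility of n(x^c) give
   n(x) = n(x^c); hence y = n(x)^-1 x^c is a two-sided inverse of x, and
   (x, x^c, t) = n(x) (x, y, t) = 0.  With these vanishing associators the
   Teichmüller identity yields n(xy) = n(y) n(x), so the cones are closed
   under products, and inverses x^-1 = n(x)^-1 x^c make their nonzero parts
   loops. *)

Section AltStarAlgebra.
Variables (R : realType) (V : lmodType R).
Variables (mul : V -> V -> V) (one : V) (c : V -> V).
Hypothesis HA : is_alt_star_alg mul one c.

Local Notation "x ** y" := (mul x y) (at level 40, left associativity).
Local Notation A := (assoc mul).
Local Notation NRM := (nrm mul c).
Local Notation Cen := (center mul).
Local Notation CU := (center_unit mul one).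
Local Notation CC := (central_cone mul one c).
Local Notation NC := (normal_cone mul one c).

Lemma one_ne0 : one <> 0.
Proof. exact/eqP/(one_neq0 HA). Qed.

Lemma mulDl x y z : (x + y) ** z = x ** z + y ** z.
Proof. by have := mul_linl HA 1 x y z; rewrite !scale1r. Qed.

Lemma mulDr x y z : x ** (y + z) = x ** y + x ** z.
Proof. by have := mul_linr HA 1 x y z; rewrite !scale1r. Qed.

Lemma mul0l z : 0 ** z = 0.
Proof. by apply: (addrI (0 ** z)); rewrite -mulDl !addr0. Qed.

Lemma mul0r z : z ** 0 = 0.
Proof. by apply: (addrI (z ** 0)); rewrite -mulDr !addr0. Qed.

Lemma mulZl a x z : (a *: x) ** z = a *: (x ** z).
Proof. by have := mul_linl HA a x 0 z; rewrite !addr0 mul0l addr0. Qed.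

Lemma mulZr a x z : x ** (a *: z) = a *: (x ** z).
Proof. by have := mul_linr HA a x z 0; rewrite !addr0 mul0r addr0. Qed.

Lemma mulNl x z : (- x) ** z = - (x ** z).
Proof. by rewrite -scaleN1r mulZl scaleN1r. Qed.

Lemma mulNr x z : x ** (- z) = - (x ** z).
Proof. by rewrite -scaleN1r mulZr scaleN1r. Qed.

Lemma mulBl x y z : (x - y) ** z = x ** z - y ** z.
Proof. by rewrite mulDl mulNl. Qed.

Lemma mulBr x y z : x ** (y - z) = x ** y - x ** z.
Proof. by rewrite mulDr mulNr. Qed.

Lemma mul_scalel k t : (k *: one) ** t = k *: t.
Proof. by rewrite mulZl (mul1x HA). Qed.

Lemma mul_scaler k t : t ** (k *: one) = k *: t.
Proof. by rewrite mulZr (mulx1 HA). Qed.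

Lemma c0 : c 0 = 0.
Proof.
have := c_lin HA 1 0 0; rewrite !scale1r !addr0 => h.
by apply: (addrI (c 0)); rewrite -h addr0.
Qed.

Lemma cD x y : c (x + y) = c x + c y.
Proof. by have := c_lin HA 1 x y; rewrite !scale1r. Qed.

Lemma cN x : c (- x) = - c x.
Proof. by have := c_lin HA (-1) x 0; rewrite !addr0 c0 addr0 !scaleN1r. Qed.

Lemma cB x y : c (x - y) = c x - c y.
Proof. by rewrite cD cN. Qed.

Lemma c_one : c one = one.
Proof. by have := c_real HA 1; rewrite !scale1r. Qed.

Lemma assoc0l y z : A 0 y z = 0.
Proof. by rewrite /assoc !mul0l subrr. Qed.

Lemma assocDl x y b d : A (x + y) b d = A x b d + A y b d.
Proof. by rewrite /assoc !(mulDl, mulDr) opprD addrACA. Qed.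

Lemma assocDm a x y d : A a (x + y) d = A a x d + A a y d.
Proof. by rewrite /assoc !(mulDl, mulDr) opprD addrACA. Qed.

Lemma assocDr a b x y : A a b (x + y) = A a b x + A a b y.
Proof. by rewrite /assoc !(mulDl, mulDr) opprD addrACA. Qed.

Lemma assoc_eq0_mulA {x y z} : A x y z = 0 -> x ** y ** z = x ** (y ** z).
Proof. by move/eqP; rewrite subr_eq0 => /eqP. Qed.

Lemma assoc_skew12 x y z : A x y z = - A y x z.
Proof.
have := assoc_alt12 HA (x + y) z.
rewrite assocDl !assocDm !(assoc_alt12 HA) add0r addr0.
by move/eqP; rewrite addr_eq0 => /eqP.
Qed.

Lemma assoc_skew23 x y z : A x y z = - A x z y.
Proof.
have := assoc_alt23 HA x (y + z).
rewrite assocDm !assocDr !(assoc_alt23 HA) add0r addr0.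
by move/eqP; rewrite addr_eq0 => /eqP.
Qed.

Lemma assoc_skew13 x y z : A x y z = - A z y x.
Proof.
have := assoc_alt13 HA (x + z) y.
rewrite assocDl !assocDr !(assoc_alt13 HA) add0r addr0.
by move/eqP; rewrite addr_eq0 => /eqP.
Qed.

Lemma assoc_cycle x y z : A x y z = A y z x.
Proof. by rewrite assoc_skew12 assoc_skew23 opprK. Qed.

Lemma c_assoc x y z : c (A x y z) = - A (c z) (c y) (c x).
Proof. by rewrite /assoc cB !(c_antimul HA) opprB. Qed.

Lemma teichmuller p q r s :
  A (p ** q) r s - A p (q ** r) s + A p q (r ** s)
  = p ** A q r s + A p q r ** s.
Proof.
have shuffle (P1 P2 P3 P4 P5 : V) :
    P1 - P2 - (P3 - P4) + (P2 - P5) = P4 - P5 + (P1 - P3).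
  by rewrite opprB addrAC -[P1 - P2 + _]addrA addKr addrACA [RHS]addrACA (addrC P1).
by rewrite /assoc !(mulBl, mulBr) shuffle.
Qed.

Lemma center_assoc_l r : Cen r -> forall x y, A r x y = 0.
Proof. by case. Qed.

Lemma center_assoc_m r : Cen r -> forall x y, A x r y = 0.
Proof. by move=> hr x y; rewrite assoc_skew12 center_assoc_l // oppr0. Qed.

Lemma center_assoc_r r : Cen r -> forall x y, A x y r = 0.
Proof. by move=> hr x y; rewrite assoc_cycle assoc_cycle center_assoc_l. Qed.

Lemma center_comm r : Cen r -> forall x, r ** x = x ** r.
Proof. by case. Qed.

Lemma center_mulA r : Cen r -> forall x y, r ** x ** y = r ** (x ** y).
Proof. by move=> hr x y; apply/assoc_eq0_mulA/center_assoc_l. Qed.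

Lemma center_mulCA r : Cen r -> forall x y, x ** (r ** y) = r ** (x ** y).
Proof.
move=> hr x y; rewrite -(assoc_eq0_mulA (center_assoc_m hr x y)).
by rewrite -(center_comm hr) center_mulA.
Qed.

Lemma assoc_center_m r x y z : Cen r -> A x (r ** y) z = r ** A x y z.
Proof.
by move=> hr; rewrite /assoc (center_mulCA hr x y) !(center_mulA hr) (center_mulCA hr) mulBr.
Qed.

Lemma center0 : Cen 0.
Proof. by split=> [x y|x]; rewrite ?assoc0l // mul0l mul0r. Qed.

Lemma center_scale k : Cen (k *: one).
Proof.
by split=> [x y|x]; rewrite ?mul_scalel ?mul_scaler // /assoc !mul_scalel mulZl subrr.
Qed.

Lemma center_one : Cen one.
Proof. by have := center_scale 1; rewrite scale1r. Qed.

Lemma center_c r : Cen r -> Cen (c r).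
Proof.
move=> hr; split=> [x y|x].
  have := c_assoc (c y) (c x) r.
  by rewrite !(c_invol HA) center_assoc_r // c0 => /eqP; rewrite eq_sym oppr_eq0 => /eqP.
rewrite -{1}[x](c_invol HA) -(c_antimul HA) -(center_comm hr).
by rewrite (c_antimul HA) (c_invol HA).
Qed.

Lemma center_mul r s : Cen r -> Cen s -> Cen (r ** s).
Proof.
move=> hr hs; split=> [x y|x].
  have := teichmuller r s x y.
  by rewrite !(center_assoc_l hr) (center_assoc_l hs) mul0l mul0r subr0 !addr0.
by rewrite (center_mulA hr) (center_comm hs) (center_mulCA hr).
Qed.

Lemma center_unit_mul r s : CU r -> CU s -> CU (r ** s).
Proof.
move=> [hr [r' [hr' [e1 e2]]]] [hs [s' [hs' [e3 e4]]]].
split; first exact: center_mul.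
exists (s' ** r'); split; first exact: center_mul.
split.
  by rewrite center_mulA // -(center_mulA hs) e3 (mul1x HA) e1.
by rewrite center_mulA // -(center_mulA hr') e2 (mul1x HA) e4.
Qed.

Lemma center_unit_c r : CU r -> CU (c r).
Proof.
move=> [hr [r' [hr' [e1 e2]]]]; split; first exact: center_c.
exists (c r'); split; first exact: center_c.
by split; rewrite -(c_antimul HA) ?e1 ?e2 c_one.
Qed.

Lemma real_nz_center_unit u : real_nz one u -> CU u.
Proof.
case=> k [k0 ->]; split; first exact: center_scale.
exists (k^-1 *: one); split; first exact: center_scale.
by split; rewrite mul_scalel scalerA ?mulfV ?mulVf // scale1r.
Qed.

Lemma real_nz_mul u w : real_nz one u -> real_nz one w -> real_nz one (u ** w).
Proof.
case=> k [k0 ->] [l [l0 ->]]; exists (k * l); split; first exact: mulf_neq0.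
by rewrite mul_scalel scalerA.
Qed.

Lemma pnatmul_eq0 (v : V) n : (0 < n)%N -> v *+ n = 0 -> v = 0.
Proof.
move=> n_gt0; rewrite -scaler_nat => /eqP; rewrite scaler_eq0 pnatr_eq0.
by case/orP=> /eqP // n0; rewrite n0 in n_gt0.
Qed.

Lemma mul_assoc_inverse a b t : a ** b = one -> b ** a = one ->
  a ** A a b t = 0 /\ A a b t ** a = 0.
Proof.
move=> hab hba.
have cyc1 : A b t a = A a b t by rewrite -assoc_cycle.
have cyc2 : A t a b = A a b t by rewrite assoc_cycle.
have h1 := teichmuller a b t a.
rewrite hab (center_assoc_l center_one) (assoc_alt13 HA) subrr add0r cyc1 in h1.
have h2 := teichmuller t a b a.
rewrite hab hba (center_assoc_m center_one) (center_assoc_r center_one)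
  (assoc_alt13 HA) mul0r subr0 addr0 add0r cyc2 in h2.
have h3 := teichmuller a t a b.
rewrite hab (center_assoc_r center_one) (assoc_alt13 HA) mul0l !addr0 cyc2 in h3.
have h4 := teichmuller a b a t.
rewrite hab hba (center_assoc_l center_one) (center_assoc_m center_one)
  (assoc_alt13 HA) mul0l subrr add0r addr0 (assoc_skew12 b) mulNr in h4.
have e1 : A (a ** t) a b = - (a ** A a b t) by rewrite assoc_cycle h4.
have e2 : A a (t ** a) b = A a b t ** a by rewrite assoc_skew23 assoc_skew13 h2 opprK.
have e3 : A a b (t ** a) = - (A a b t ** a) by rewrite assoc_skew13 h2.
rewrite e1 e2 in h3; rewrite e3 in h1.
move: h1 h3; set X := a ** _; set Y := _ ** a => h1 h3.
(* h1 : -Y = X + Y and h3 : -X - Y = X, whence 3 Y = 0 *)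
have eX : X = - Y - Y by apply: (addIr Y); rewrite -h1 subrK.
rewrite eX opprD !opprK addrK in h3.
have Y0 : Y = 0.
  apply: (@pnatmul_eq0 _ 3) => //.
  by rewrite !mulrS mulr0n addr0 {1}h3 -opprD addNr.
by rewrite eX Y0 oppr0 addr0.
Qed.

Lemma assoc_inverse a b t : a ** b = one -> b ** a = one -> A a b t = 0.
Proof.
move=> hab hba.
have [h1 h2] := mul_assoc_inverse t hab hba.
have [h3 h4] := mul_assoc_inverse t hba hab.
rewrite assoc_skew12 mulNr in h3; rewrite assoc_skew12 mulNl in h4.
move/eqP: h3; rewrite oppr_eq0 => /eqP h3.
move/eqP: h4; rewrite oppr_eq0 => /eqP h4.
set X := A a b t in h1 h2 h3 h4 *.
have e1 : A X a b = - X by rewrite /assoc h2 hab mul0l (mulx1 HA) sub0r.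
have e2 : A X b a = - X by rewrite /assoc h4 hba mul0l (mulx1 HA) sub0r.
have := assoc_skew23 X a b; rewrite e1 e2 opprK => h.
apply: (@pnatmul_eq0 _ 2) => //.
by rewrite mulr2n -{1}h addNr.
Qed.

Lemma mul_inverseKl a b t : a ** b = one -> b ** a = one -> a ** (b ** t) = t.
Proof.
move=> hab hba.
by rewrite -(assoc_eq0_mulA (assoc_inverse t hab hba)) hab (mul1x HA).
Qed.

Lemma mul_inverseKr a b t : a ** b = one -> b ** a = one -> t ** a ** b = t.
Proof.
move=> hab hba; have := assoc_inverse t hab hba.
by rewrite -assoc_cycle => /assoc_eq0_mulA ->; rewrite hab (mulx1 HA).
Qed.

Lemma nrm_c x : NRM (c x) = c x ** x.
Proof. by rewrite /nrm (c_invol HA). Qed.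

Lemma center_unit_central_cone r : CU r -> CC r.
Proof.
move=> hr; right; rewrite nrm_c /nrm.
by split; apply: center_unit_mul => //; exact: center_unit_c.
Qed.

Lemma central_cone_c x : CC x -> CC (c x).
Proof. by case=> [->|[h1 h2]]; [left; exact: c0 | right; rewrite (c_invol HA)]. Qed.

Lemma normal_cone_c x : NC x -> NC (c x).
Proof. by case=> [->|[h1 h2]]; [left; exact: c0 | right; rewrite (c_invol HA)]. Qed.

Lemma normal_central_cone x : NC x -> CC x.
Proof. by case=> [->|[h1 h2]]; [left | right; split; exact: real_nz_center_unit]. Qed.

Lemma central_cone_nrm_center x : CC x -> Cen (NRM x).
Proof. by case=> [->|[[] //]]; rewrite /nrm c0 mul0r; exact: center0. Qed.

Lemma central_cone_nrm_c x : CC x -> NRM x = NRM (c x).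
Proof.
case=> [->|[[hu _] [hw [w' [_ [e1 _]]]]]]; first by rewrite c0.
rewrite nrm_c in hw e1 *.
(* flexibility, n(x) x = x n(x^c), yields n(x) n(x^c) = n(x^c) n(x^c); cancel n(x^c) *)
have flex : NRM x ** x = x ** (c x ** x).
  exact: assoc_eq0_mulA (assoc_alt13 HA x (c x)).
have e : NRM x ** (c x ** x) = c x ** x ** (c x ** x).
  rewrite -(center_mulCA hu) flex.
  by rewrite -(assoc_eq0_mulA (center_assoc_r hw (c x) x)).
have := congr1 (mul^~ w') e.
by rewrite /= (center_mulA hu) (center_mulA hw) e1 !(mulx1 HA).
Qed.

Lemma central_cone_inverse x v : CC x -> Cen v -> NRM x ** v = one ->
  x ** (v ** c x) = one /\ v ** c x ** x = one.
Proof.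
move=> hx hv e1; have e2 : v ** NRM x = one by rewrite (center_comm hv).
split; first by rewrite (center_mulCA hv).
by rewrite (center_mulA hv) -nrm_c -(central_cone_nrm_c hx).
Qed.

Lemma central_cone_inverse_eq x v y : CC x -> Cen v -> NRM x ** v = one ->
  x ** y = one -> y ** x = one -> y = v ** c x.
Proof.
move=> hx hv e1 hxy hyx; have [i1 _] := central_cone_inverse hx hv e1.
by rewrite -(mul_inverseKl (v ** c x) hyx hxy) i1 (mulx1 HA).
Qed.

Lemma central_cone_assoc x : CC x -> forall t, A x (c x) t = 0.
Proof.
case=> [->|[hu hw]] t; first by rewrite assoc0l.
case: (hu) => hu0 [v [hv [e1 _]]].
have [i1 i2] := central_cone_inverse (or_intror (conj hu hw)) hv e1.
have -> : c x = NRM x ** (v ** c x) by rewrite -(center_mulA hu0) e1 (mul1x HA).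
by rewrite assoc_center_m // assoc_inverse // mul0r.
Qed.

Lemma nrm_mul x y : Cen (NRM y) -> (forall t, A x (c x) t = 0) ->
  (forall t, A y (c y) t = 0) -> NRM (x ** y) = NRM y ** NRM x.
Proof.
rewrite /nrm => hu Px Py; rewrite (c_antimul HA).
have E : A x y (c y ** c x) = 0.
  have := teichmuller y (c y) (c x) x.
  have k : A (c y) (c x) x = 0 by rewrite assoc_cycle assoc_skew12 Px oppr0.
  rewrite (center_assoc_l hu) Py Py k mul0l mul0r sub0r !addr0.
  by rewrite -assoc_cycle => /eqP; rewrite oppr_eq0 => /eqP.
by rewrite (assoc_eq0_mulA E) -(assoc_eq0_mulA (Py (c x))) (center_mulCA hu).
Qed.

Lemma central_cone_nrm_mul x y : CC x -> CC y -> NRM (x ** y) = NRM y ** NRM x.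
Proof.
by move=> hx hy; apply: nrm_mul; [exact: central_cone_nrm_center | exact: central_cone_assoc ..].
Qed.

Lemma central_cone_mul x y : CC x -> CC y -> CC (x ** y).
Proof.
move=> hx hy.
case: (hx) => [->|[ux wx]]; first by left; rewrite mul0l.
case: (hy) => [->|[uy wy]]; first by left; rewrite mul0r.
have cx := central_cone_c hx; have cy := central_cone_c hy.
right; rewrite (c_antimul HA) !central_cone_nrm_mul //.
by split; exact: center_unit_mul.
Qed.

Lemma normal_cone_mul x y : NC x -> NC y -> NC (x ** y).
Proof.
move=> hx hy.
case: (hx) => [->|[ux wx]]; first by left; rewrite mul0l.
case: (hy) => [->|[uy wy]]; first by left; rewrite mul0r.
have cx := normal_central_cone hx; have cy := normal_central_cone hy.
have cx' := central_cone_c cx; have cy' := central_cone_c cy.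
right; rewrite (c_antimul HA) !central_cone_nrm_mul //.
by split; exact: real_nz_mul.
Qed.

Lemma normal_cone_scale k : k != 0 -> NC (k *: one).
Proof.
move=> k0; right; rewrite /nrm !(c_real HA) mul_scalel scalerA.
by split; exists (k * k); split => //; exact: mulf_neq0.
Qed.

Lemma is_loop_nonzero (P : V -> Prop) : P one ->
  (forall a b, P a -> P b -> P (a ** b)) ->
  (forall a, P a -> a <> 0 -> exists2 b, P b & a ** b = one /\ b ** a = one) ->
  is_loop mul one (fun x => P x /\ x <> 0).
Proof.
move=> P1 PM Pinv.
have inv a : P a /\ a <> 0 -> exists2 b, P b /\ b <> 0 & a ** b = one /\ b ** a = one.
  case=> Pa a0; have [b Pb [ab ba]] := Pinv a Pa a0.
  by exists b => //; split => // b0; apply: one_ne0; rewrite -ab b0 mul0r.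
have PM' a b : P a /\ a <> 0 -> P b /\ b <> 0 -> P (a ** b) /\ a ** b <> 0.
  move=> Sa [Pb b0]; split; first exact: PM Sa.1 Pb.
  have [a' _ [e1 e2]] := inv a Sa.
  by move=> ab0; apply: b0; rewrite -(mul_inverseKl b e2 e1) ab0 mul0r.
split; first by split=> //; exact: one_ne0.
split=> //; split=> a b Sa Sb; have [a' Sa' [e1 e2]] := inv a Sa.
  exists (a' ** b); split; first by split; [exact: PM' | exact: mul_inverseKl].
  by move=> x [_ <-]; rewrite mul_inverseKl.
exists (b ** a'); split; first by split; [exact: PM' | exact: mul_inverseKr].
by move=> y [_ <-]; rewrite mul_inverseKr.
Qed.

Lemma central_cone_has_inverse x : CC x -> x <> 0 ->
  exists2 y, CC y & x ** y = one /\ y ** x = one.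
Proof.
move=> hx x0; case: (hx) => [//|[[hu [v [hv [e1 _]]]] _]].
exists (v ** c x); last exact: central_cone_inverse.
apply: central_cone_mul; last exact: central_cone_c.
by apply: center_unit_central_cone; split=> //; exists (NRM x); rewrite (center_comm hv) e1.
Qed.

Lemma normal_cone_has_inverse x : NC x -> x <> 0 ->
  exists2 y, NC y & x ** y = one /\ y ** x = one.
Proof.
move=> hx x0; case: (hx) => [//|[[k [k0 ek]] _]].
have e1 : NRM x ** (k^-1 *: one) = one by rewrite ek mul_scalel scalerA mulfV ?scale1r.
exists ((k^-1 *: one) ** c x).
  by apply: normal_cone_mul; [apply: normal_cone_scale; rewrite invr_eq0 | exact: normal_cone_c].
exact: central_cone_inverse (normal_central_cone hx) (center_scale _) e1.
Qed.

Lemma central_cone_loop : is_loop mul one (fun x => CC x /\ x <> 0).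
Proof.
apply: is_loop_nonzero; [|exact: central_cone_mul|exact: central_cone_has_inverse].
apply: center_unit_central_cone; apply: real_nz_center_unit.
by exists 1; rewrite scale1r oner_neq0.
Qed.

Lemma normal_cone_loop : is_loop mul one (fun x => NC x /\ x <> 0).
Proof.
apply: is_loop_nonzero; [|exact: normal_cone_mul|exact: normal_cone_has_inverse].
by have := @normal_cone_scale 1 (oner_neq0 R); rewrite scale1r.
Qed.

End AltStarAlgebra.

Theorem theorem1p7 (R : realType) (V : lmodType R)
    (mul : V -> V -> V) (one : V) (c : V -> V)
    (HA : is_alt_star_alg mul one c) :
  (forall x, central_cone mul one c x ->
     (* (1) *)
     nrm mul c x = nrm mul c (c x) /\
     (* (2) *)
     (x <> 0 ->
        invertible mul one x /\
        forall v, center mul v -> mul (nrm mul c x) v = one -> mul v (nrm mul c x) = one ->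
          forall y, mul x y = one -> mul y x = one -> y = mul v (c x)) /\
     (* (3) *)
     (forall y, assoc mul x (c x) y = 0) /\
     (* (4) *)
     (forall y, central_cone mul one c y ->
        nrm mul c (mul x y) = mul (nrm mul c x) (nrm mul c y) /\
        mul (nrm mul c x) (nrm mul c y) = mul (nrm mul c y) (nrm mul c x) /\
        mul (nrm mul c y) (nrm mul c x) = nrm mul c (mul y x))) /\
  (forall x y, central_cone mul one c x -> central_cone mul one c y ->
     central_cone mul one c (mul x y)) /\
  (forall x y, normal_cone mul one c x -> normal_cone mul one c y ->
     normal_cone mul one c (mul x y)) /\
  is_loop mul one (fun x => central_cone mul one c x /\ x <> 0) /\
  is_loop mul one (fun x => normal_cone mul one c x /\ x <> 0).
Proof.
split; last first.
  split; first exact: (central_cone_mul HA).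
  split; first exact: (normal_cone_mul HA).
  by split; [exact: (central_cone_loop HA) | exact: (normal_cone_loop HA)].
move=> x hx; split; first exact: (central_cone_nrm_c HA hx).
split.
  move=> x0; split=> [|v hv e1 _ y]; last exact: (central_cone_inverse_eq HA y hx hv e1).
  by have [y _ xy] := central_cone_has_inverse HA hx x0; exists y.
split; first exact: (central_cone_assoc HA hx).
move=> y hy; rewrite !(central_cone_nrm_mul HA) //.
by rewrite (center_comm (central_cone_nrm_center HA hx)).
Qed.
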